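(* Let $M$ be a monoid and $I$ an rf-compatible ideal of $M$ such that $N=M\setminus I$ is a submonoid of $M$. Then $M$ is residually finite if and only if $N$ is residually finite.
   Context: An ideal $I$ of a monoid $M$ is rf-compatible with $M$ if for any two distinct $s,t\in I$ there is a congruence $\rho$ of finite index on the semigroup $I$ with $s/\rho\neq t/\rho$ such that $\rho\cup\Delta_M$ is a congruence on $M$, where $\Delta_M=\{(x,x):x\in M\}$. A monoid is residually finite if distinct elements are separated by homomorphisms to finite monoids. *)

From Stdlib Require Import List ProofIrrelevance.
Set Implicit Arguments.

Record Monoid := MkMonoid {
  carrier :> Type;
  mop : carrier -> carrier -> carrier;
  munit : carrier;
  massoc : forall x y z, mop x (mop y z) = mop (mop x y) z;
  mul1 : forall x, mop munit x = x;
  mulr1 : forall x, mop x munit = x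
}.

Arguments mop {m}.
Arguments munit {m}.

Definition is_finite (T : Type) : Prop := exists l : list T, forall x, In x l.

Definition is_monoid_hom {M F : Monoid} (f : M -> F) : Prop :=
  (forall x y, f (mop x y) = mop (f x) (f y)) /\ f munit = munit.

Definition residually_finite (M : Monoid) : Prop :=
  forall s t : M, s <> t ->
    exists (F : Monoid) (f : M -> F),
      is_finite F /\ is_monoid_hom (M:=M) (F:=F) f /\ f s <> f t.

Definition is_ideal {M : Monoid} (I : M -> Prop) : Prop :=
  forall m x, I x -> I (mop m x) /\ I (mop x m).

Definition is_congruence {M : Monoid} (r : M -> M -> Prop) : Prop :=
  (forall x, r x x) /\ (forall x y, r x y -> r y x) /\
  (forall x y z, r x y -> r y z -> r x z) /\
  (forall x y m, r x y -> r (mop m x) (mop m y) /\ r (mop x m) (mop y m)).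

(* rho (a relation on M, only its restriction to I matters) is a
   congruence on the semigroup I. *)
Definition is_congruence_on {M : Monoid} (I : M -> Prop) (rho : M -> M -> Prop) : Prop :=
  (forall x, I x -> rho x x) /\
  (forall x y, I x -> I y -> rho x y -> rho y x) /\
  (forall x y z, I x -> I y -> I z -> rho x y -> rho y z -> rho x z) /\
  (forall x y z, I x -> I y -> I z -> rho x y ->
      rho (mop z x) (mop z y) /\ rho (mop x z) (mop y z)).

Definition finite_index_on {M : Monoid} (I : M -> Prop) (rho : M -> M -> Prop) : Prop :=
  exists l : list M, (forall y, In y l -> I y) /\
    forall x, I x -> exists y, In y l /\ rho x y.

Definition union_diag {M : Monoid} (I : M -> Prop) (rho : M -> M -> Prop) : M -> M -> Prop :=
  fun x y => (I x /\ I y /\ rho x y) \/ x = y.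

Definition rf_compatible {M : Monoid} (I : M -> Prop) : Prop :=
  is_ideal I /\
  forall s t, I s -> I t -> s <> t ->
    exists rho : M -> M -> Prop,
      is_congruence_on I rho /\ finite_index_on I rho /\ ~ rho s t /\
      is_congruence (union_diag I rho).

Lemma sig_eq_pi (M : Monoid) (P : M -> Prop) (a b : {x : M | P x}) :
  proj1_sig a = proj1_sig b -> a = b.
Proof.
  destruct a as [a Ha], b as [b Hb]; simpl; intros ->.
  f_equal; apply proof_irrelevance.
Qed.

Definition submonoid {M : Monoid} (P : M -> Prop) (P1 : P munit)
  (PM : forall x y, P x -> P y -> P (mop x y)) : Monoid.
Proof.
  refine (@MkMonoid {x : M | P x}
            (fun a b => exist _ (mop (proj1_sig a) (proj1_sig b))
                              (PM _ _ (proj2_sig a) (proj2_sig b)))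
            (exist _ munit P1) _ _ _);
  intros; apply sig_eq_pi; simpl;
  [apply massoc | apply mul1 | apply mulr1].
Defined.

(* The direction from M to N is restriction. Conversely, two elements of N that
   are separated in N stay separated in M after adjoining a zero to the finite
   image and sending the ideal I to it. Two elements s, t of I are separated by
   a finite-index congruence rho on I, which is extended to M by relating
   x, y in N when they act in the same way, on the left and on the right, on
   the finitely many rho-classes of I; this extension is a congruence on M of
   finite index that still keeps s and t apart. *)

From Stdlib Require Import List Classical ClassicalEpsilon FunctionalExtensionality
  PropExtensionality ProofIrrelevance.
Import ListNotations.

Set Implicit Arguments.
Unset Strict Implicit.

Definition separated (M : Monoid) (s t : M) : Prop :=
  exists (F : Monoid) (f : M -> F), is_finite F /\ is_monoid_hom f /\ f s <> f t.
Arguments separated : clear implicits.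

Lemma separated_sym (M : Monoid) (s t : M) : separated M s t -> separated M t s.
Proof. intros (F & f & HF & Hf & Hst). exists F, f. auto. Qed.

Definition finite_index {M : Monoid} (R : M -> M -> Prop) : Prop :=
  exists l : list M, forall x, exists y, In y l /\ R x y.

Lemma residually_finite_submonoid (M : Monoid) (P : M -> Prop) (P1 : P munit)
  (PM : forall x y, P x -> P y -> P (mop x y)) :
  residually_finite M -> residually_finite (submonoid P P1 PM).
Proof.
  intros HM a b Hab.
  assert (Hne : proj1_sig a <> proj1_sig b) by (intros E; apply Hab, sig_eq_pi, E).
  destruct (HM _ _ Hne) as (F & f & HF & [Hmul Hunit] & Hsep).
  exists F, (fun a => f (proj1_sig a)). repeat split; auto.
  intros x y. apply Hmul.
Qed.

Lemma finite_index_of_kernel (M : Monoid) (R : M -> M -> Prop) (T : Type) (G : M -> T)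
  (values : list T) :
  (forall x, In (G x) values) -> (forall x y, G x = G y -> R x y) -> finite_index R.
Proof.
  intros HG HR.
  pose (preimage := fun c => epsilon (inhabits munit) (fun x : M => G x = c)).
  exists (map preimage values). intros x. exists (preimage (G x)). split.
  - apply in_map, HG.
  - apply HR. symmetry. apply (epsilon_spec (inhabits munit) (fun y => G y = G x)).
    now exists x.
Qed.

Fixpoint words (A : Type) (l : list A) (n : nat) : list (list A) :=
  match n with
  | 0 => [[]]
  | S n => flat_map (fun a => map (cons a) (words l n)) l
  end.

Lemma map_in_words (A B : Type) (h : A -> B) (s : list A) (l : list B) :
  (forall a, In a s -> In (h a) l) -> In (map h s) (words l (length s)).
Proof.
  induction s as [|a s IH]; simpl; intros Hh; [now left|].
  apply in_flat_map. exists (h a). split; auto using in_map.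
Qed.

Section QuotientMonoid.

Variables (M : Monoid) (R : M -> M -> Prop).
Hypothesis R_cong : is_congruence R.

Definition class : Type := {C : M -> Prop | exists x, C = R x}.

Definition class_of (x : M) : class := exist _ (R x) (ex_intro _ x eq_refl).

Lemma class_of_surj (a : class) : exists x, a = class_of x.
Proof.
  destruct a as [C [x HC]]. subst C. exists x. apply subset_eq_compat. reflexivity.
Qed.

Lemma class_of_eq (x y : M) : class_of x = class_of y <-> R x y.
Proof.
  destruct R_cong as (Rrefl & Rsym & Rtrans & _). split.
  - intros E. apply (f_equal (@proj1_sig _ _)) in E. simpl in E.
    rewrite E. apply Rrefl.
  - intros Hxy. apply subset_eq_compat. extensionality z.
    apply propositional_extensionality. split; eauto.
Qed.

Definition class_rep (a : class) : M :=
  proj1_sig (constructive_indefinite_description _ (proj2_sig a)).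

Lemma class_rep_of (x : M) : R (class_rep (class_of x)) x.
Proof.
  apply class_of_eq. unfold class_rep.
  destruct (constructive_indefinite_description _ _) as [y Hy].
  apply subset_eq_compat. symmetry. exact Hy.
Qed.

Definition class_mul (a b : class) : class := class_of (mop (class_rep a) (class_rep b)).

Lemma class_mul_of (x y : M) : class_mul (class_of x) (class_of y) = class_of (mop x y).
Proof.
  destruct R_cong as (_ & _ & Rtrans & Rmul).
  apply class_of_eq. apply (Rtrans _ (mop x (class_rep (class_of y)))).
  - apply Rmul, class_rep_of.
  - apply Rmul, class_rep_of.
Qed.

Definition quotient_monoid : Monoid.
Proof.
  refine (@MkMonoid class class_mul (class_of munit) _ _ _); intros;
    repeat match goal with a : class |- _ =>
      let x := fresh "x" in destruct (class_of_surj a) as [x ->]; clear a end;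
    rewrite ?class_mul_of; f_equal;
    [apply massoc | apply mul1 | apply mulr1].
Defined.

Lemma class_of_hom : is_monoid_hom (F:=quotient_monoid) class_of.
Proof. split; [intros x y; symmetry; apply class_mul_of | reflexivity]. Qed.

Lemma quotient_monoid_finite : finite_index R -> is_finite quotient_monoid.
Proof.
  intros [l Hl]. exists (map class_of l). intros a.
  destruct (class_of_surj a) as [x ->]. destruct (Hl x) as [y [Hy Hxy]].
  apply in_map_iff. exists y. split; [apply class_of_eq, R_cong, Hxy | exact Hy].
Qed.

End QuotientMonoid.

Lemma separated_of_congruence (M : Monoid) (R : M -> M -> Prop) (s t : M) :
  is_congruence R -> finite_index R -> ~ R s t -> separated M s t.
Proof.
  intros Hcong Hfin Hst. exists (quotient_monoid Hcong), (class_of R).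
  split; [|split].
  - apply quotient_monoid_finite, Hfin.
  - apply class_of_hom.
  - intros E. apply Hst, (class_of_eq Hcong), E.
Qed.

Definition with_zero (F : Monoid) : Monoid.
Proof.
  refine (@MkMonoid (option F)
            (fun a b => match a, b with Some a, Some b => Some (mop a b) | _, _ => None end)
            (Some munit) _ _ _);
    [intros [x|] [y|] [z|] | intros [x|] | intros [x|]];
    f_equal; auto using massoc, mul1, mulr1.
Defined.

Lemma with_zero_finite (F : Monoid) : is_finite F -> is_finite (with_zero F).
Proof.
  intros [l Hl]. exists (None :: map Some l).
  intros [a|]; simpl; auto using in_map.
Qed.

Definition trivial_monoid : Monoid.
Proof.
  refine (@MkMonoid unit (fun _ _ => tt) tt _ _ _); intros; now destruct x.
Defined.

Section ReesExtension.

Variables (M : Monoid) (I : M -> Prop).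
Hypotheses (I_ideal : is_ideal I) (N1 : ~ I munit)
  (NM : forall x y, ~ I x -> ~ I y -> ~ I (mop x y)).

Let N := submonoid (fun x => ~ I x) N1 NM.

Definition rees_extension (F : Monoid) (f : N -> F) (x : M) : with_zero F :=
  match excluded_middle_informative (I x) with
  | left _ => None
  | right Hx => Some (f (exist _ x Hx))
  end.

Lemma rees_extension_ideal (F : Monoid) (f : N -> F) (x : M) :
  I x -> rees_extension f x = None.
Proof.
  intros Hx. unfold rees_extension.
  destruct (excluded_middle_informative (I x)); [reflexivity | contradiction].
Qed.

Lemma rees_extension_complement (F : Monoid) (f : N -> F) (x : M) (Hx : ~ I x) :
  rees_extension f x = Some (f (exist _ x Hx)).
Proof.
  unfold rees_extension. destruct (excluded_middle_informative (I x)) as [|Hx'];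
    [contradiction|].
  rewrite (proof_irrelevance _ Hx' Hx). reflexivity.
Qed.

Lemma rees_extension_hom (F : Monoid) (f : N -> F) :
  is_monoid_hom f -> is_monoid_hom (rees_extension f).
Proof.
  intros [f_mul f_unit]. split.
  - intros x y.
    destruct (classic (I x)) as [Hx|Hx]; [|destruct (classic (I y)) as [Hy|Hy]].
    + rewrite (rees_extension_ideal f Hx), (rees_extension_ideal f (proj2 (I_ideal y Hx))).
      reflexivity.
    + rewrite (rees_extension_ideal f Hy), (rees_extension_ideal f (proj1 (I_ideal x Hy))).
      now destruct (rees_extension f x).
    + rewrite (rees_extension_complement f Hx), (rees_extension_complement f Hy),
        (rees_extension_complement f (NM Hx Hy)).
      simpl. f_equal. rewrite <- f_mul. reflexivity.
  - rewrite (rees_extension_complement f N1). simpl. f_equal. exact f_unit.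
Qed.

Lemma separated_complement (s t : M) (Hs : ~ I s) (Ht : ~ I t) :
  separated N (exist _ s Hs) (exist _ t Ht) -> separated M s t.
Proof.
  intros (F & f & HF & Hf & Hst).
  exists (with_zero F), (rees_extension f). split; [|split].
  - apply with_zero_finite, HF.
  - apply rees_extension_hom, Hf.
  - rewrite (rees_extension_complement f Hs), (rees_extension_complement f Ht).
    intros E. injection E. exact Hst.
Qed.

Lemma separated_ideal_complement (s t : M) : I s -> ~ I t -> separated M s t.
Proof.
  intros Hs Ht.
  exists (with_zero trivial_monoid), (rees_extension (fun _ : N => tt : trivial_monoid)).
  split; [|split].
  - apply with_zero_finite. exists [tt]. intros []. now left.
  - apply rees_extension_hom. split; reflexivity.
  - rewrite rees_extension_ideal, (rees_extension_complement _ Ht) by exact Hs.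
    discriminate.
Qed.

End ReesExtension.

Section CongruenceExtension.

Variables (M : Monoid) (I : M -> Prop) (rho : M -> M -> Prop).
Hypotheses (I_ideal : is_ideal I) (NM : forall x y, ~ I x -> ~ I y -> ~ I (mop x y))
  (rho_cong : is_congruence_on I rho) (rho_diag : is_congruence (union_diag I rho)).
Variable reps : list M.
Hypotheses (reps_ideal : forall y, In y reps -> I y)
  (reps_cover : forall x, I x -> exists y, In y reps /\ rho x y).

Lemma ideal_mull (m x : M) : I x -> I (mop m x).
Proof. intros Hx. exact (proj1 (I_ideal m Hx)). Qed.

Lemma ideal_mulr (m x : M) : I x -> I (mop x m).
Proof. intros Hx. exact (proj2 (I_ideal m Hx)). Qed.

Hint Resolve ideal_mull ideal_mulr : core.

(* This is where the hypothesis that rho ∪ Δ_M is a congruence on M enters. *)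
Lemma rho_mul (a b m : M) :
  I a -> I b -> rho a b -> rho (mop m a) (mop m b) /\ rho (mop a m) (mop b m).
Proof.
  intros Ha Hb Hab. destruct rho_diag as (_ & _ & _ & Hmul).
  destruct (Hmul a b m) as [Hl Hr]; [left; auto|].
  destruct rho_cong as [Hrefl _].
  split; [destruct Hl as [(_ & _ & H)| ->] | destruct Hr as [(_ & _ & H)| ->]]; auto.
Qed.

Definition rho_extension (x y : M) : Prop :=
  (I x /\ I y /\ rho x y) \/
  (~ I x /\ ~ I y /\ (forall k, I k -> rho (mop k x) (mop k y)) /\
   (forall k, I k -> rho (mop x k) (mop y k))).

Lemma rho_extension_congruence : is_congruence rho_extension.
Proof.
  destruct rho_cong as (Hrefl & Hsym & Htrans & _).
  split; [|split; [|split]].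
  - intros x. destruct (classic (I x)) as [Hx|Hx]; [left|right]; repeat split; auto.
  - intros x y [(Hx & Hy & Hxy)|(Hx & Hy & Hl & Hr)]; [left|right]; repeat split; auto.
  - intros x y z [(Hx & Hy & Hxy)|(Hx & Hy & Hxyl & Hxyr)]
      [(Hy' & Hz & Hyz)|(Hy' & Hz & Hyzl & Hyzr)];
      try contradiction; [left; eauto | right; repeat split; auto].
    + intros k Hk. apply (Htrans _ (mop k y)); auto.
    + intros k Hk. apply (Htrans _ (mop y k)); auto.
  - intros x y z [(Hx & Hy & Hxy)|(Hx & Hy & Hl & Hr)].
    + split; left; repeat split; auto; apply rho_mul; auto.
    + destruct (classic (I z)) as [Hz|Hz].
      * split; left; repeat split; auto.
      * split; right; repeat split; auto; intros k Hk.
        -- rewrite !massoc. auto.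
        -- rewrite <- !massoc. apply rho_mul; auto.
        -- rewrite !massoc. apply rho_mul; auto.
        -- rewrite <- !massoc. auto.
Qed.

Definition rho_rep (x : M) : M := epsilon (inhabits x) (fun y => In y reps /\ rho x y).

Lemma rho_rep_spec (x : M) : I x -> In (rho_rep x) reps /\ rho x (rho_rep x).
Proof. intros Hx. unfold rho_rep. apply epsilon_spec, reps_cover, Hx. Qed.

Lemma rho_of_rep_eq (x y : M) : I x -> I y -> rho_rep x = rho_rep y -> rho x y.
Proof.
  intros Hx Hy E. destruct rho_cong as (_ & Hsym & Htrans & _).
  destruct (rho_rep_spec Hx) as [Hrx Hx'], (rho_rep_spec Hy) as [Hry Hy'].
  rewrite E in Hrx, Hx'. apply (Htrans _ (rho_rep y)); auto.
Qed.

Lemma rho_agree_of_reps (g h : M -> M) :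
  (forall k, I k -> I (g k) /\ I (h k)) ->
  (forall a b, I a -> I b -> rho a b -> rho (g a) (g b) /\ rho (h a) (h b)) ->
  (forall r, In r reps -> rho_rep (g r) = rho_rep (h r)) ->
  forall k, I k -> rho (g k) (h k).
Proof.
  intros HI Hcompat Hreps k Hk. destruct rho_cong as (_ & Hsym & Htrans & _).
  destruct (rho_rep_spec Hk) as [Hr Hkr].
  assert (HIr : I (rho_rep k)) by auto.
  destruct (HI k Hk), (HI _ HIr), (Hcompat _ _ Hk HIr Hkr).
  apply (Htrans _ (g (rho_rep k))); auto.
  apply (Htrans _ (h (rho_rep k))); auto.
  apply rho_of_rep_eq; auto.
Qed.

(* A finite-valued invariant whose kernel refines rho_extension. *)
Definition action_profile (x : M) : M + (list M * list M) :=
  match excluded_middle_informative (I x) with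
  | left _ => inl (rho_rep x)
  | right _ =>
      inr (map (fun k => rho_rep (mop k x)) reps, map (fun k => rho_rep (mop x k)) reps)
  end.

Lemma action_profile_in (x : M) :
  In (action_profile x)
    (map inl reps ++ map inr (list_prod (words reps (length reps)) (words reps (length reps)))).
Proof.
  unfold action_profile. destruct (excluded_middle_informative (I x)) as [Hx|Hx].
  - apply in_or_app. left. apply in_map, rho_rep_spec, Hx.
  - apply in_or_app. right. apply in_map, in_prod; apply map_in_words;
      intros k Hk; apply rho_rep_spec; auto.
Qed.

Lemma rho_extension_of_profile (x y : M) :
  action_profile x = action_profile y -> rho_extension x y.
Proof.
  unfold action_profile.
  destruct (excluded_middle_informative (I x)) as [Hx|Hx],
    (excluded_middle_informative (I y)) as [Hy|Hy]; intros E; try discriminate.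
  - left. injection E as E. repeat split; auto. apply rho_of_rep_eq; auto.
  - right. injection E as El Er. repeat split; auto.
    + apply (rho_agree_of_reps (g := fun k => mop k x) (h := fun k => mop k y)).
      * intros k Hk. split; auto.
      * intros a b Ha Hb Hab. split; apply rho_mul; auto.
      * apply map_ext_in_iff, El.
    + apply (rho_agree_of_reps (g := fun k => mop x k) (h := fun k => mop y k)).
      * intros k Hk. split; auto.
      * intros a b Ha Hb Hab. split; apply rho_mul; auto.
      * apply map_ext_in_iff, Er.
Qed.

Lemma rho_extension_finite_index : finite_index rho_extension.
Proof. exact (finite_index_of_kernel action_profile_in rho_extension_of_profile). Qed.

Lemma separated_in_ideal (s t : M) : I s -> I t -> ~ rho s t -> separated M s t.
Proof.
  intros Hs Ht Hst.
  apply (separated_of_congruence rho_extension_congruence rho_extension_finite_index).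
  intros [(_ & _ & H)|(H & _)]; auto.
Qed.

End CongruenceExtension.

Theorem mainTheorem11 (M : Monoid) (I : M -> Prop)
  (Hrf : rf_compatible I)
  (N1 : ~ I munit)
  (NM : forall x y, ~ I x -> ~ I y -> ~ I (mop x y)) :
  residually_finite M <-> residually_finite (submonoid (fun x => ~ I x) N1 NM).
Proof.
  destruct Hrf as [I_ideal rho_sep].
  split; [apply residually_finite_submonoid|].
  intros HN s t Hst.
  destruct (classic (I s)) as [Hs|Hs], (classic (I t)) as [Ht|Ht].
  - destruct (rho_sep s t Hs Ht Hst)
      as (rho & rho_cong & [reps [reps_ideal reps_cover]] & Hrho & rho_diag).
    exact (separated_in_ideal I_ideal NM rho_cong rho_diag reps_ideal reps_cover Hs Ht Hrho).
  - exact (separated_ideal_complement I_ideal N1 NM Hs Ht).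
  - exact (separated_sym (separated_ideal_complement I_ideal N1 NM Ht Hs)).
  - apply (separated_complement I_ideal (N1 := N1) (NM := NM) (Hs := Hs) (Ht := Ht)), HN.
    intros E. apply Hst. exact (f_equal (@proj1_sig _ _) E).
Qed.
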